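(* Let $A\in\mathbb{R}^{n\times n}$ be the weighted adjacency matrix of a strongly connected weighted directed graph on $\{1,\ldots,n\}$, and let $P=D_{out}^{-1}A$, $Q=D_{in}^{-1}A^T$. For $\ell\ge 1$ let $S^{(\ell)}=2^{-\ell}\sum_{|\Psi|=\ell}\Psi(P,Q)\Psi(P,Q)^T$, and set $S^{(0)}=I$. Then for every $\ell\ge 1$, $$S^{(\ell)}=\tfrac12\big(PS^{(\ell-1)}P^T+QS^{(\ell-1)}Q^T\big).$$
   Context: The graph has node set $\{1,\ldots,n\}$; $A_{ij}>0$ is the weight of the link $i\to j$ and $A_{ij}=0$ if there is no such link. Strong connectivity means that for any nodes $i,j$ there is a directed walk from $i$ to $j$. $d^{out}_i=\sum_j A_{ij}$, $d^{in}_i=\sum_j A_{ji}$, $D_{out}=\mathrm{Diag}(d^{out}_1,\ldots,d^{out}_n)$, $D_{in}=\mathrm{Diag}(d^{in}_1,\ldots,d^{in}_n)$ (nonsingular under strong connectivity). A walk pattern is a nonempty finite sequence $\Psi=\psi_1\cdots\psi_\ell$ with $\psi_k\in\{d,r\}$, $|\Psi|=\ell$. For $M,N\in\mathbb{R}^{n\times n}$, $\Psi(M,N)=X_1\cdots X_\ell$ with $X_k=M$ if $\psi_k=d$ and $X_k=N$ if $\psi_k=r$. The sum $\sum_{|\Psi|=\ell}$ runs over all $2^\ell$ walk patterns of length $\ell$. *)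

From HB Require Import structures.
From mathcomp Require Import all_boot all_order all_algebra.
Set Implicit Arguments. Unset Strict Implicit. Unset Printing Implicit Defensive.
Import Order.TTheory GRing.Theory Num.Theory.
Local Open Scope ring_scope.

Definition nonneg_mx (R : realFieldType) n (A : 'M[R]_n) :=
  forall i j, 0 <= A i j.

Definition edge_rel (R : realFieldType) n (A : 'M[R]_n) : rel 'I_n :=
  fun i j => 0 < A i j.

Definition strongly_connected (R : realFieldType) n (A : 'M[R]_n) :=
  forall i j : 'I_n, connect (edge_rel A) i j.

Definition dout (R : realFieldType) n (A : 'M[R]_n) (i : 'I_n) : R :=
  \sum_j A i j.
Definition din (R : realFieldType) n (A : 'M[R]_n) (i : 'I_n) : R :=
  \sum_j A j i.

Definition Dout (R : realFieldType) n (A : 'M[R]_n) : 'M[R]_n :=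
  diag_mx (\row_i dout A i).
Definition Din (R : realFieldType) n (A : 'M[R]_n) : 'M[R]_n :=
  diag_mx (\row_i din A i).

Definition Pmx (R : realFieldType) n (A : 'M[R]_n) : 'M[R]_n :=
  invmx (Dout A) *m A.
Definition Qmx (R : realFieldType) n (A : 'M[R]_n) : 'M[R]_n :=
  invmx (Din A) *m A^T.

(* A walk pattern of length l is an l-tuple over {d, r}, encoded as bool:
   true = d, false = r.  Psi(M, N) = X_1 ... X_l. *)
Definition pattern_eval (R : realFieldType) n (s : seq bool) (M N : 'M[R]_n)
  : 'M[R]_n :=
  foldr (fun b X => (if b then M else N) *m X) 1%:M s.

Definition Smx (R : realFieldType) n (A : 'M[R]_n) (l : nat) : 'M[R]_n :=
  if l is 0 then 1%:M else
  (2%:R ^- l) *: \sum_(t : l.-tuple bool)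
     (pattern_eval t (Pmx A) (Qmx A) *m (pattern_eval t (Pmx A) (Qmx A))^T).

From HB Require Import structures.
From mathcomp Require Import all_boot all_order all_algebra.
Set Implicit Arguments. Unset Strict Implicit.
Import Order.TTheory GRing.Theory Num.Theory.
Local Open Scope ring_scope.

(* Every pattern of length l+1 is a letter followed by a pattern Psi of
   length l, and (X Psi(P,Q)) (X Psi(P,Q))^T = X (Psi(P,Q) Psi(P,Q)^T) X^T.
   Summing over the first letter X in {P, Q} gives the recursion for the
   unnormalised sums; the factor 2^-l then splits as 2^-1 * 2^-(l-1). *)

Lemma sum_tuple_cons (T : finType) (V : nmodType) l (F : l.+1.-tuple T -> V) :
  \sum_(t : l.+1.-tuple T) F t = \sum_(x : T) \sum_(t : l.-tuple T) F [tuple of x :: t].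
Proof.
pose cons_tuple (p : T * l.-tuple T) := [tuple of p.1 :: p.2].
have cons_tuple_bij : bijective cons_tuple.
  exists (fun t => (thead t, [tuple of behead t])).
  - by case=> x t; congr pair; apply: val_inj.
  - by move=> t; rewrite [RHS]tuple_eta.
rewrite (reindex cons_tuple (onW_bij _ cons_tuple_bij)).
by rewrite -(pair_big xpredT xpredT (fun (x : T) (t : l.-tuple T) => F [tuple of x :: t])).
Qed.

Section PatternGram.
Variables (R : realFieldType) (n : nat) (P Q : 'M[R]_n).

Definition pattern_gram l : 'M[R]_n :=
  \sum_(t : l.-tuple bool) pattern_eval t P Q *m (pattern_eval t P Q)^T.

Lemma pattern_gram0 : pattern_gram 0 = 1%:M.
Proof.
rewrite /pattern_gram (big_pred1 [tuple]); last by move=> t; rewrite [t]tuple0 /= eqxx.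
by rewrite trmx1 mulmx1.
Qed.

Lemma pattern_gramS l :
  pattern_gram l.+1 = P *m pattern_gram l *m P^T + Q *m pattern_gram l *m Q^T.
Proof.
rewrite /pattern_gram sum_tuple_cons big_bool !mulmx_sumr !mulmx_suml.
by congr (_ + _); apply: eq_bigr => t _; rewrite /= trmx_mul !mulmxA.
Qed.

End PatternGram.

Lemma Smx_pattern_gram (R : realFieldType) n (A : 'M[R]_n) l :
  Smx A l = 2%:R ^- l *: pattern_gram (Pmx A) (Qmx A) l.
Proof. by case: l => [|l] //; rewrite pattern_gram0 expr0 invr1 scale1r. Qed.

Theorem lemma1 (R : realFieldType) (n : nat) (A : 'M[R]_n)
  (hA : nonneg_mx A) (hsc : strongly_connected A) (l : nat) (hl : (1 <= l)%N) :
  Smx A l = (2%:R)^-1 *: (Pmx A *m Smx A l.-1 *m (Pmx A)^T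
                         + Qmx A *m Smx A l.-1 *m (Qmx A)^T).
Proof.
case: l hl => [|l] // _.
rewrite !Smx_pattern_gram pattern_gramS -!scalemxAr -!scalemxAl -scalerDr scalerA.
by rewrite exprS invfM mulrC.
Qed.
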